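(* Let $G=(\mathbb Z/a_1\mathbb Z)\times\dots\times(\mathbb Z/a_r\mathbb Z)$ be a finite Abelian group and let $f,g:G\to\mathbb C$. Suppose that $\widehat f$ is nowhere zero or $\widehat g$ is nowhere zero, and that $M_n(f;x_1,\dots,x_{n-1})=M_n(g;x_1,\dots,x_{n-1})$ for all $n\in\{1,2,3\}$ and all $x_1,\dots,x_{n-1}\in G$. Then there exists $y\in G$ with $g(x)=f(x+y)$ for all $x\in G$.
   Context: Elements of $G$ are tuples $x=(x[1],\dots,x[r])$ with componentwise addition modulo $a_k$. Define $\chi(x,y)=\exp\left(2\pi i\sum_{k=1}^r \frac{x[k]y[k]}{a_k}\right)$. The discrete Fourier transform of $f$ is $\widehat f(x)=\sum_{y\in G}f(y)\overline{\chi(x,y)}$. The $n$-th autocorrelation is $M_n(f;x_1,\dots,x_{n-1})=\sum_{y\in G}f(y)f(y+x_1)\cdots f(y+x_{n-1})$. *)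

From mathcomp Require Import all_boot all_algebra.
From mathcomp Require Import reals trigo.
From mathcomp Require Import complex.
Import GRing.Theory Num.Theory.

Set Implicit Arguments.
Unset Strict Implicit.
Unset Printing Implicit Defensive.

Local Open Scope ring_scope.
Local Open Scope complex_scope.

Lemma ord_pos (n : nat) (i : 'I_n) : (0 < n)%N.
Proof. exact: leq_ltn_trans (leq0n i) (ltn_ord i). Qed.

Definition ord_add (n : nat) (i j : 'I_n) : 'I_n :=
  Ordinal (ltn_pmod (i + j)%N (ord_pos i)).

Definition grp (r : nat) (a : 'I_r -> nat) : finType :=
  {dffun forall k : 'I_r, 'I_(a k)}.

Definition gadd (r : nat) (a : 'I_r -> nat) (x y : grp a) : grp a :=
  [ffun k => ord_add (x k) (y k)].

Definition expi (R : realType) (t : R) : R[i] := cos t +i* sin t.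

Definition chi (R : realType) (r : nat) (a : 'I_r -> nat) (x y : grp a) : R[i] :=
  expi (2 * pi * \sum_(k < r) ((x k * y k)%N%:R / (a k)%:R)).

Definition dft (R : realType) (r : nat) (a : 'I_r -> nat) (f : grp a -> R[i])
  (x : grp a) : R[i] :=
  \sum_(y : grp a) f y * (chi R x y)^*.

Definition autocorr (R : realType) (r : nat) (a : 'I_r -> nat) (f : grp a -> R[i])
  (n : nat) (xs : n.-1.-tuple (grp a)) : R[i] :=
  \sum_(y : grp a) f y * \prod_(z <- xs) f (gadd y z).

(* Let F and H be the Fourier transforms of f and g.  The first autocorrelation
   gives H 0 = F 0, and expanding the third one in characters gives equal
   bispectra: H v * H w * H (-(v+w)) = F v * F w * F (-(v+w)).  If F never
   vanishes, these two identities force H / F to be a homomorphism from G to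
   the nonzero complex numbers, hence a character u |-> cchi u z of G.  So H
   is the transform of a translate of f, and Fourier inversion identifies g
   with that translate.  If instead H never vanishes, exchange f and g. *)

From HB Require Import structures.
From mathcomp Require Import all_boot all_algebra.
From mathcomp Require Import reals trigo.
From mathcomp Require Import complex.
From mathcomp Require Import ring.
Import GRing.Theory Num.Theory.
Local Open Scope ring_scope.
Local Open Scope complex_scope.
Set Implicit Arguments.
Unset Strict Implicit.
Unset Printing Implicit Defensive.

Section ComplexExponential.
Variable R : realType.

Lemma expiD (s t : R) : expi (s + t) = expi s * expi t.
Proof. by rewrite /expi cosD sinD /=; congr (_ +i* _); rewrite addrC. Qed.

Lemma expi0 : expi (0 : R) = 1.
Proof. by rewrite /expi cos0 sin0. Qed.

Lemma expi2pi_natr (n : nat) : expi (2 * pi * n%:R : R) = 1.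
Proof.
elim: n => [|n IHn]; first by rewrite mulr0 expi0.
rewrite -[n.+1]addn1 natrD mulrDr expiD IHn mul1r mulr1.
by rewrite /expi mulr_natl cos2pi sin2pi.
Qed.

Lemma expiN2pi_neq1 (t : R) : 0 < t < 1 -> expi (- (2 * pi * t)) != 1.
Proof.
move=> /andP[t_gt0 t_lt1]; apply/negP => /eqP/(congr1 (@complex.Re R)) /=.
rewrite cosN (_ : 2 * pi * t = (pi * t) *+ 2); last by rewrite mulr_natl mulrnAl.
rewrite cos_mulr2n => /eqP; rewrite subr_eq (_ : 1 + 1 = 1 *+ 2) // eqrMn2r /=.
move=> /eqP cos2_eq1.
have sin_gt0 : 0 < sin (pi * t).
  apply: sin_gt0_pi; rewrite mulr_gt0 ?pi_gt0 //=.
  by rewrite -[X in _ < X]mulr1 ltr_pM2l ?pi_gt0.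
have : sin (pi * t) ^+ 2 = 0 by rewrite sin2cos2 cos2_eq1 subrr.
by move/eqP; rewrite sqrf_eq0 (negbTE (lt0r_neq0 sin_gt0)).
Qed.

End ComplexExponential.

Section GroupLaw.
Variables (r : nat) (a : 'I_r -> nat).
Hypothesis a_gt0 : forall k, (0 < a k)%N.

Definition gzero : grp a := [ffun k => Ordinal (a_gt0 k)].
Definition gopp (x : grp a) : grp a :=
  [ffun k => Ordinal (ltn_pmod (a k - x k) (a_gt0 k))].

Lemma grpP (x y : grp a) : (forall k, x k = y k :> nat) -> x = y.
Proof. by move=> xy; apply/ffunP => k; apply/val_inj/xy. Qed.

Lemma gaddE (x y : grp a) k : gadd x y k = ((x k + y k) %% a k)%N :> nat.
Proof. by rewrite ffunE. Qed.

Lemma gaddA : associative (@gadd r a).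
Proof.
by move=> x y z; apply: grpP => k; rewrite !gaddE modnDml modnDmr addnA.
Qed.

Lemma gaddC : commutative (@gadd r a).
Proof. by move=> x y; apply: grpP => k; rewrite !gaddE addnC. Qed.

Lemma gadd0 : left_id gzero (@gadd r a).
Proof.
by move=> x; apply: grpP => k; rewrite gaddE /gzero ffunE /= add0n modn_small.
Qed.

Lemma gaddN : left_inverse gzero gopp (@gadd r a).
Proof.
move=> x; apply: grpP => k.
by rewrite gaddE /gzero /gopp !ffunE /= modnDml subnK ?modnn // ltnW.
Qed.

End GroupLaw.

(* [grp a] can only be a group when every [a k] is positive, so the additive
   structure lives on an alias carrying that hypothesis. *)
Definition zgrp (r : nat) (a : 'I_r -> nat) (a_gt0 : forall k, (0 < a k)%N) : Type :=
  grp a.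
HB.instance Definition _ r a a_gt0 := Finite.copy (@zgrp r a a_gt0) (grp a).
HB.instance Definition _ r a a_gt0 := GRing.isZmodule.Build (@zgrp r a a_gt0)
  (@gaddA r a) (@gaddC r a) (gadd0 a_gt0) (gaddN a_gt0).

Lemma ratio_morph (V : zmodType) (K : fieldType) (F H : V -> K) :
  (forall v, F v != 0) -> H 0 = F 0 ->
  (forall v w, H v * H w * H (- (v + w)) = F v * F w * F (- (v + w))) ->
  {morph (fun v => H v / F v) : v w / v + w >-> v * w}.
Proof.
move=> F_neq0 H0 HF; pose phi v := H v / F v.
have HN v : H v * H (- v) = F v * F (- v).
  have := HF v 0; rewrite addr0 H0 [H v * _ * _]mulrAC [F v * _ * _]mulrAC.
  exact: (mulIf (F_neq0 0)).
have phiN v : phi v * phi (- v) = 1.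
  by rewrite /phi mulf_div HN divff // mulf_neq0.
have phiT v w : phi v * phi w * phi (- (v + w)) = 1.
  by rewrite /phi !mulf_div HF divff // !mulf_neq0.
move=> v w; change (phi (v + w) = phi v * phi w).
by rewrite -[LHS]mulr1 -(phiT v w) mulrCA phiN mulr1.
Qed.

Section Fourier.
Variables (R : realType) (r : nat) (a : 'I_r -> nat).
Hypothesis a_gt0 : forall k, (0 < a k)%N.
Local Notation G := (zgrp a_gt0).
Local Notation N := (#|grp a|%:R : R[i]).

Lemma addgE (x y : G) k : (x + y) k = ((x k + y k) %% a k)%N :> nat.
Proof. exact: gaddE. Qed.

Lemma card_neq0 : N != 0.
Proof. by rewrite pnatr_eq0 -lt0n; apply/card_gt0P; exists (0 : G). Qed.

Definition gdot (u x : G) : R := \sum_(k < r) (u k * x k)%:R / (a k)%:R.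

Definition cchi (u x : G) : R[i] := expi (- (2 * pi * gdot u x)).

Lemma gdotC (u x : G) : gdot u x = gdot x u.
Proof. by apply: eq_bigr => k _; rewrite mulnC. Qed.

(* [gdot] is additive only modulo the integers: [m] counts the carries. *)
Lemma gdotDr (u x y : G) :
  exists m : nat, gdot u (x + y) = gdot u x + gdot u y - m%:R.
Proof.
exists (\sum_(k < r) u k * ((x k + y k) %/ a k))%N.
rewrite /gdot -big_split /= natr_sum -sumrB; apply: eq_bigr => k _.
have a_neq0 : (a k)%:R != 0 :> R by rewrite pnatr_eq0 -lt0n.
apply: (mulIf a_neq0); rewrite mulrBl divfK // -mulrDl divfK // addgE.
rewrite -natrD -mulnDr {2}(divn_eq (x k + y k) (a k)) mulnDr mulnA !natrD.
by rewrite [(_ * a k)%:R]natrM addrAC subrr add0r.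
Qed.

Lemma cchiC (u x : G) : cchi u x = cchi x u.
Proof. by rewrite /cchi gdotC. Qed.

Lemma cchiDr (u x y : G) : cchi u (x + y) = cchi u x * cchi u y.
Proof.
rewrite /cchi; have [m ->] := gdotDr u x y; rewrite -expiD.
rewrite (_ : - _ = - (2 * pi * gdot u x) - 2 * pi * gdot u y + 2 * pi * m%:R).
  by rewrite [LHS]expiD expi2pi_natr mulr1.
by ring.
Qed.

Lemma cchiDl (u v x : G) : cchi (u + v) x = cchi u x * cchi v x.
Proof. by rewrite cchiC cchiDr ![cchi x _]cchiC. Qed.

Lemma cchi0l (x : G) : cchi 0 x = 1.
Proof.
rewrite /cchi /gdot big1 ?mulr0 ?oppr0 ?expi0 // => k _.
by rewrite ffunE mul0n mul0r.
Qed.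

Lemma cchiNr (u x : G) : cchi u (- x) * cchi u x = 1.
Proof. by rewrite -cchiDr addNr cchiC cchi0l. Qed.

Lemma cchi_neq1 (x : G) : x != 0 -> exists d : G, cchi d x != 1.
Proof.
move=> x_neq0; have [k xk_neq0] : exists k, x k != 0%N :> nat.
  apply/existsP; apply: contraNT x_neq0 => /existsPn x0; apply/eqP/grpP => k.
  by rewrite ffunE; apply/eqP/negPn/x0.
pose d : G := [ffun j => Ordinal (ltn_pmod (j == k) (a_gt0 j))].
exists d; rewrite /cchi (_ : gdot d x = (x k)%:R / (a k)%:R).
  have ak_gt0 : 0 < (a k)%:R :> R by rewrite ltr0n.
  apply: expiN2pi_neq1; rewrite divr_gt0 ?ak_gt0 ?ltr0n ?lt0n //=.
  by rewrite ltr_pdivrMr // mul1r ltr_nat.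
rewrite /gdot (bigD1 k) //= big1 ?addr0 => [|j /negbTE j_neq_k].
  rewrite ffunE /= eqxx modn_small ?mul1n //.
  by rewrite (leq_ltn_trans _ (ltn_ord (x k))) // lt0n.
by rewrite ffunE /= j_neq_k mod0n mul0n mul0r.
Qed.

Lemma sum_cchi (x : G) : \sum_u cchi u x = if x == 0 then N else 0.
Proof.
case: eqP => [-> | /eqP x_neq0].
  by under eq_bigr do rewrite cchiC cchi0l; rewrite sumr_const.
have [d dx_neq1] := cchi_neq1 x_neq0.
have : \sum_u cchi u x = cchi d x * \sum_u cchi u x.
  rewrite {1}(reindex_inj (addrI d)) mulr_sumr.
  by apply: eq_bigr => u _; rewrite cchiDl.
move/eqP; rewrite -subr_eq0 -{1}[\sum_u _]mul1r -mulrBl mulf_eq0 subr_eq0.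
by rewrite eq_sym (negbTE dx_neq1) => /eqP.
Qed.

Lemma dftE (f : G -> R[i]) (u : G) : dft f u = \sum_x f x * cchi u x.
Proof. by apply: eq_bigr => x _; rewrite /cchi /chi /expi /= cosN sinN. Qed.

Lemma dft0 (f : G -> R[i]) : dft f (0 : G) = \sum_x f x.
Proof. by rewrite dftE; apply: eq_bigr => x _; rewrite cchi0l mulr1. Qed.

Lemma dft_inversion (f : G -> R[i]) (x : G) : \sum_u dft f u * cchi u (- x) = N * f x.
Proof.
under eq_bigr do rewrite dftE mulr_suml.
rewrite exchange_big /=.
under eq_bigr => y _ do under eq_bigr => u _ do rewrite -mulrA -cchiDr.
under eq_bigr => y _ do rewrite -mulr_sumr sum_cchi subr_eq0.
rewrite (bigD1 x) //= eqxx big1 ?addr0 ?[_ * N]mulrC // => y /negbTE ->.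
by rewrite mulr0.
Qed.

Lemma dft_inj (f g : G -> R[i]) : dft f =1 dft g -> f =1 g.
Proof.
move=> fg x; apply: (mulfI card_neq0); rewrite -!dft_inversion.
by apply: eq_bigr => u _; rewrite fg.
Qed.

Lemma dft_shift (f : G -> R[i]) (c u : G) :
  dft f u = cchi u c * dft (fun x => f (c + x)) u.
Proof.
rewrite !dftE (reindex_inj (addrI c)) mulr_sumr.
by apply: eq_bigr => x _; rewrite cchiDr mulrCA.
Qed.

Definition triple_corr (f : G -> R[i]) (x1 x2 : G) : R[i] :=
  \sum_c f c * f (c + x1) * f (c + x2).

Lemma autocorr1E (f : G -> R[i]) : autocorr (n := 1) f [tuple] = \sum_x f x.
Proof. by apply: eq_bigr => x _; rewrite big_nil mulr1. Qed.

Lemma autocorr3E (f : G -> R[i]) (x1 x2 : G) :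
  autocorr (n := 3) f [tuple x1; x2] = triple_corr f x1 x2.
Proof. by apply: eq_bigr => c _; rewrite /= !big_cons big_nil mulr1 mulrA. Qed.

Lemma dft_triple (f : G -> R[i]) (v w : G) :
  dft f v * dft f w * dft f (- (v + w)) =
  \sum_x1 \sum_x2 cchi v x1 * cchi w x2 * triple_corr f x1 x2.
Proof.
transitivity (\sum_c \sum_x1 \sum_x2
    cchi v x1 * cchi w x2 * (f c * f (c + x1) * f (c + x2))); last first.
  rewrite exchange_big; apply: eq_bigr => x1 _.
  by rewrite exchange_big; apply: eq_bigr => x2 _; rewrite mulr_sumr.
rewrite (dftE f (- (v + w))) mulr_sumr; apply: eq_bigr => c _.
rewrite (dft_shift f c v) (dft_shift f c w).
set A := dft _ v; set B := dft _ w.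
have -> : cchi v c * A * (cchi w c * B) * (f c * cchi (- (v + w)) c) =
          cchi v c * cchi w c * cchi (- (v + w)) c * (f c * (A * B)) by ring.
rewrite -!cchiDl subrr cchi0l mul1r /A /B !dftE mulr_suml mulr_sumr.
apply: eq_bigr => x1 _; rewrite !mulr_sumr; apply: eq_bigr => x2 _; ring.
Qed.

Lemma morph_cchi (phi : G -> R[i]) :
  phi 0 = 1 -> {morph phi : u v / u + v >-> u * v} ->
  exists z, forall u, phi u = cchi u z.
Proof.
move=> phi0 phiD; pose S z := \sum_u phi u * cchi z u.
have sumS : \sum_z S z = N.
  rewrite exchange_big /=; under eq_bigr do rewrite -mulr_sumr sum_cchi.
  rewrite (bigD1 0) //= eqxx phi0 mul1r big1 ?addr0 // => u /negbTE ->.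
  by rewrite mulr0.
have [z Sz_neq0] : exists z, S z != 0.
  apply/existsP; apply: contraTT card_neq0 => /existsPn S0.
  by rewrite negbK -sumS big1 // => z _; apply/eqP/negPn/S0.
(* Reindexing by [v] gives [S z = phi v * cchi z v * S z]. *)
exists (- z) => v.
have phi_cchi : phi v * cchi z v = 1.
  apply: (mulIf Sz_neq0); rewrite mul1r {2}/S (reindex_inj (addrI v)) mulr_sumr.
  by apply: eq_bigr => u _; rewrite phiD cchiDr mulrACA.
by rewrite -[phi v]mulr1 -(cchiNr v z) mulrCA [cchi v z]cchiC phi_cchi mulr1.
Qed.

Lemma eq_triple_corr_translate (f g : G -> R[i]) :
  (forall u : G, dft f u != 0) -> \sum_x f x = \sum_x g x ->
  (forall x1 x2, triple_corr f x1 x2 = triple_corr g x1 x2) ->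
  exists y, forall x, g x = f (x + y).
Proof.
move=> dft_neq0 eq_sum eq_triple.
have dft0_eq : dft g (0 : G) = dft f (0 : G) by rewrite !dft0.
have bispectrum_eq (v w : G) :
    dft g v * dft g w * dft g (- (v + w)) = dft f v * dft f w * dft f (- (v + w)).
  rewrite !dft_triple; apply: eq_bigr => x1 _; apply: eq_bigr => x2 _.
  by rewrite eq_triple.
have [|z ratio_cchi] := morph_cchi _ (ratio_morph dft_neq0 dft0_eq bispectrum_eq).
  by rewrite /= dft0_eq divff.
exists (- z) => x; rewrite addrC; apply: (dft_inj (g := fun x => f (- z + x))) => u.
move: (ratio_cchi u) => /= /(congr1 (fun t => t * dft f u)); rewrite divfK // => ->.
by rewrite (dft_shift f (- z)) mulrA [cchi u z * _]mulrC cchiNr mul1r.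
Qed.

End Fourier.

Theorem theorem1 (R : realType) (r : nat) (a : 'I_r -> nat)
  (ha : forall k : 'I_r, (0 < a k)%N)
  (f g : grp a -> R[i]) :
  ((forall x : grp a, dft f x != 0) \/ (forall x : grp a, dft g x != 0)) ->
  (forall n : nat, (1 <= n <= 3)%N ->
     forall xs : n.-1.-tuple (grp a), autocorr f xs = autocorr g xs) ->
  exists y : grp a, forall x : grp a, g x = f (gadd x y).
Proof.
move=> dft_neq0 eq_autocorr.
suff [y hy] : exists y : zgrp ha, forall x : zgrp ha, g x = f (x + y) by exists y.
have eq_sum : \sum_(x : zgrp ha) f x = \sum_x g x.
  by rewrite -!(autocorr1E (a_gt0 := ha)) eq_autocorr.
have eq_triple (x1 x2 : zgrp ha) : triple_corr f x1 x2 = triple_corr g x1 x2.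
  by rewrite -!(autocorr3E (a_gt0 := ha)) eq_autocorr.
case: dft_neq0 => [dft_f_neq0 | dft_g_neq0].
  exact: eq_triple_corr_translate dft_f_neq0 eq_sum eq_triple.
have [y hy] := eq_triple_corr_translate dft_g_neq0 (esym eq_sum)
  (fun x1 x2 => esym (eq_triple x1 x2)).
by exists (- y) => x; rewrite hy subrK.
Qed.
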